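(* Under the hypotheses of Theorem 4 (either case (i) or case (ii)), the solution also satisfies \[ \lim_{t\to\infty}\frac{x(t)}{F^{-1}(t)}=+\infty\qquad\text{and}\qquad\lim_{t\to\infty}\frac{F(x(t))}{t}=0. \] Here Theorem 4's hypotheses are: $f\in C(\mathbb{R};\mathbb{R})$ locally Lipschitz with $f(0)=0$, $xf(x)>0$ for $x\neq0$; $g\in C([0,\infty);\mathbb{R})$ with $g(t)>0$ for $t>0$; $\xi>0$; $x$ is the unique continuous solution of $x'(t)=-f(x(t))+g(t)$, $x(0)=\xi$, and $x(t)\to0$; $\lim_{t\to\infty}g(t)/f(F^{-1}(t))=+\infty$; $f\in\mathrm{RV}_0(\beta)$ with $\beta>1$; $g\in\mathrm{RV}_\infty(-\theta)$ with either $\theta>0$, or $\theta=0$ and $g$ asymptotic to a decreasing function.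
   Context: $F(x)=\int_x^1 \frac{du}{f(u)}$ for $x>0$, strictly decreasing with inverse $F^{-1}$. $\mathrm{RV}_0(\beta)$: measurable positive $\varphi$ on $(0,\infty)$ with $\varphi(\lambda x)/\varphi(x)\to\lambda^\beta$ as $x\to0^+$ for every $\lambda>0$. $\mathrm{RV}_\infty(\alpha)$: measurable positive $h$ with $h(\lambda t)/h(t)\to\lambda^\alpha$ as $t\to\infty$ for every $\lambda>0$. *)

From Stdlib Require Import Reals Lra.
Open Scope R_scope.

Definition IsF (f F : R -> R) : Prop :=
  forall x, 0 < x ->
    exists pr : Riemann_integrable (fun u => / f u) x 1, F x = RiemannInt pr.

(* Finv is the inverse of F (on the range of F, which contains [T,+oo)). *)
Definition IsFinv (F Finv : R -> R) : Prop :=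
  exists T, forall t, T <= t -> 0 < Finv t /\ F (Finv t) = t.

Definition tends_to_pinfty (h : R -> R) : Prop :=
  forall M, exists T, forall t, T <= t -> M < h t.

Definition tends_to_at_pinfty (h : R -> R) (l : R) : Prop :=
  forall eps, 0 < eps -> exists T, forall t, T <= t -> Rabs (h t - l) < eps.

Definition loc_lipschitz (f : R -> R) : Prop :=
  forall a, 0 < a -> exists L, forall x y, Rabs x <= a -> Rabs y <= a ->
    Rabs (f x - f y) <= L * Rabs (x - y).

Definition RV0 (phi : R -> R) (beta : R) : Prop :=
  (forall x, 0 < x -> 0 < phi x) /\
  forall lam, 0 < lam -> forall eps, 0 < eps -> exists delta, 0 < delta /\
    forall x, 0 < x < delta -> Rabs (phi (lam * x) / phi x - Rpower lam beta) < eps.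

Definition RVinf (h : R -> R) (alpha : R) : Prop :=
  (forall t, 0 < t -> 0 < h t) /\
  forall lam, 0 < lam -> tends_to_at_pinfty (fun t => h (lam * t) / h t) (Rpower lam alpha).

(* g is asymptotic (as t -> oo) to a (non-increasing) decreasing function *)
Definition asymp_decreasing (g : R -> R) : Prop :=
  exists h : R -> R, (forall s t, 0 < s -> s <= t -> h t <= h s) /\
    tends_to_at_pinfty (fun t => g t / h t) 1.

From Coquelicot Require Import Coquelicot.
From Stdlib Require Import Reals Lra ClassicalEpsilon Classical.
Open Scope R_scope.
Set Bullet Behavior "Strict Subproofs".

(* Both conclusions come from the regular variation of f at 0 and from the hypothesis
   g(t) / f(Finv t) -> +oo, together with the sign condition on f, positivity of g and of
   the initial value, and x -> 0.

   1. x(t) / Finv(t) -> +oo.  For a continuous f in RV_0(beta), beta > 0, a uniform version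
      of regular variation holds: for every M there is K with f(y) <= K f(z) whenever
      0 < y <= M z and z is small.  It is obtained from the Baire category theorem on [1,2]
      (Karamata's argument), iteration over geometric ranges, and halving for y < z.
      If x(t) <= M Finv(t) at a late time t, then at every earlier late time r where
      x(r) <= x(t) we get f(x(r)) <= K f(Finv r) < g(r), so x'(r) > 0; a comparison
      principle for derivatives then gives x(T) <= x(t), contradicting x -> 0.
   2. F(x(t)) / t -> 0.  Since beta > 1, f(2v) >= c f(v) with c > 2 near 0, so the integral
      of 1/f over [y, d] shrinks by the factor c/2 > 1 under y |-> 2y.  As x(t) eventually
      exceeds 2^k Finv(t) for each k, F(x(t)) <= F(d) + t / (c/2)^k. *)

Lemma Rmax_le_inv a b c : Rmax a b <= c -> a <= c /\ b <= c.
Proof. intros H. split; eapply Rle_trans; eauto; [apply Rmax_l | apply Rmax_r]. Qed.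

Lemma pow_unbounded rho A : 1 < rho -> exists m : nat, A <= rho ^ m.
Proof.
  intros Hrho.
  destruct (Pow_x_infinity rho ltac:(rewrite Rabs_pos_eq; lra) A) as [m Hm].
  exists m. specialize (Hm m (Nat.le_refl m)).
  rewrite Rabs_pos_eq in Hm by (apply pow_le; lra). lra.
Qed.

Lemma Rpower_ge_1 a e : 1 <= a -> 0 <= e -> 1 <= Rpower a e.
Proof. intros Ha He. rewrite <- (Rpower_O a) by lra. apply Rle_Rpower; lra. Qed.

Lemma smaller_just_left (x : R -> R) r D :
  derivable_pt_lim x r D -> 0 < D ->
  exists eta, 0 < eta /\ forall h, 0 < h < eta -> x (r - h) < x r.
Proof.
  intros Hx HD. destruct (Hx D HD) as [eta Heta].
  exists eta. split; [apply cond_pos|]. intros h Hh.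
  assert (Hq := Heta (- h) ltac:(lra) ltac:(rewrite Rabs_Ropp, Rabs_right; lra)).
  replace (r + - h) with (r - h) in Hq by ring.
  apply Rabs_def2 in Hq.
  assert (Hslope : 0 < (x r - x (r - h)) / h).
  { replace ((x r - x (r - h)) / h) with ((x (r - h) - x r) / - h) by (field; lra). lra. }
  assert (x r - x (r - h) = (x r - x (r - h)) / h * h) by (field; lra). nra.
Qed.

(* Otherwise a minimum point of x on [a,b] lies in (a,b] and x would
   be smaller just to its left. *)
Lemma endpoint_dominates (x D : R -> R) a b : 0 < a -> a <= b ->
  (forall r, 0 < r -> derivable_pt_lim x r (D r)) ->
  (forall r, a <= r <= b -> x r <= x b -> 0 < D r) -> x a <= x b.
Proof.
  intros Ha Hab Hder Hpos.
  apply Rnot_lt_le. intro Hlt.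
  destruct (continuity_ab_min x a b Hab) as [r [Hmin Hr]].
  { intros c Hc. apply derivable_continuous_pt. exists (D c). apply Hder. lra. }
  assert (Hxr : x r <= x b) by (apply Hmin; lra).
  assert (Hra : r <> a) by (intros ->; lra).
  destruct (smaller_just_left x r (D r) (Hder r ltac:(lra)) (Hpos r Hr Hxr))
    as [eta [Heta Hleft]].
  set (h := Rmin eta (r - a) / 2).
  assert (Hh : 0 < h < eta /\ h <= r - a).
  { assert (0 < Rmin eta (r - a)) by (apply Rmin_pos; lra).
    pose proof (Rmin_l eta (r - a)). pose proof (Rmin_r eta (r - a)). unfold h. lra. }
  specialize (Hleft h ltac:(lra)).
  assert (x r <= x (r - h)) by (apply Hmin; lra). lra.
Qed.

Definition is_closed (E : R -> Prop) : Prop :=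
  forall y, (forall eta, 0 < eta -> exists z, E z /\ Rabs (z - y) < eta) -> E y.

Lemma is_closed_le (phi psi : R -> R) :
  continuity phi -> continuity psi -> is_closed (fun a => phi a <= psi a).
Proof.
  intros Hphi Hpsi y Hy. apply Rnot_lt_le. intro Hlt.
  set (h := fun a => phi a - psi a).
  assert (Hh : continuity_pt h y) by (apply continuity_pt_minus; auto).
  destruct (proj1 (continuity_pt_locally h y) Hh (mkposreal (h y) ltac:(unfold h; lra)))
    as [eta Heta].
  destruct (Hy eta (cond_pos eta)) as [z [Hz Hzy]].
  specialize (Heta z Hzy). simpl in Heta. apply Rabs_def2 in Heta. unfold h in Heta. lra.
Qed.

Lemma is_closed_and (E1 E2 : R -> Prop) :
  is_closed E1 -> is_closed E2 -> is_closed (fun a => E1 a /\ E2 a).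
Proof.
  intros H1 H2 y Hy. split; [apply H1 | apply H2]; intros eta Heta;
    destruct (Hy eta Heta) as [z [[Hz1 Hz2] Hz]]; eauto.
Qed.

Lemma is_closed_forall {I : Type} (P : I -> Prop) (E : I -> R -> Prop) :
  (forall i, is_closed (E i)) -> is_closed (fun a => forall i, P i -> E i a).
Proof.
  intros HE y Hy i Hi. apply HE. intros eta Heta.
  destruct (Hy eta Heta) as [z [Hz Hzy]]. eauto.
Qed.

Lemma nested_intervals (p q : nat -> R) :
  Un_growing p -> Un_decreasing q -> (forall n, p n <= q n) ->
  exists s, forall n, p n <= s <= q n.
Proof.
  intros Hp Hq Hpq.
  assert (Hcross : forall n m, p n <= q m).
  { intros n m. destruct (Nat.le_ge_cases n m) as [Hnm | Hmn].
    - pose proof (growing_prop p m n Hp Hnm). pose proof (Hpq m). lra.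
    - pose proof (decreasing_prop q m n Hq Hmn). pose proof (Hpq n). lra. }
  destruct (completeness (fun y => exists n, y = p n)) as [s [Hub Hlub]].
  - exists (q O). intros y [n ->]. apply Hcross.
  - exists (p O). eauto.
  - exists s. intro n. split.
    + apply Hub. eauto.
    + apply Hlub. intros y [k ->]. apply Hcross.
Qed.

Lemma avoid_closed_set (E : R -> Prop) p q : is_closed E -> p < q ->
  (exists a, p <= a <= q /\ ~ E a) ->
  exists p' q', p <= p' /\ p' < q' /\ q' <= q /\ forall a, p' <= a <= q' -> ~ E a.
Proof.
  intros HE Hpq [a [Ha HEa]].
  assert (Hball : exists eta, 0 < eta /\ forall b, Rabs (b - a) < eta -> ~ E b).
  { apply NNPP. intro Hno. apply HEa, HE. intros eta Heta.
    apply NNPP. intro Hnz. apply Hno. exists eta. split; [exact Heta|].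
    intros b Hb Eb. apply Hnz. eauto. }
  destruct Hball as [eta [Heta Hball]].
  exists (Rmax p (a - eta / 2)), (Rmin q (a + eta / 2)).
  pose proof (Rmax_l p (a - eta / 2)). pose proof (Rmax_r p (a - eta / 2)).
  pose proof (Rmin_l q (a + eta / 2)). pose proof (Rmin_r q (a + eta / 2)).
  split; [lra|]. split.
  { apply Rmax_lub_lt; apply Rmin_glb_lt; lra. }
  split; [lra|]. intros b Hb. apply Hball, Rabs_def1; lra.
Qed.

(* Otherwise, successively shrinking
   [A,B] to avoid E 0, E 1, ... yields nested intervals whose common point is in no E n. *)
Theorem baire_interval (E : nat -> R -> Prop) A B :
  A < B -> (forall n, is_closed (E n)) ->
  (forall a, A <= a <= B -> exists n, E n a) ->
  exists n p q, p < q /\ forall a, p <= a <= q -> E n a.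
Proof.
  intros HAB HE Hcov. apply NNPP. intro Hno.
  (* For each n, every nondegenerate interval has a subinterval avoiding E n. *)
  assert (Hshrink : forall nI : nat * (R * R), exists J : R * R,
    fst (snd nI) < snd (snd nI) ->
    fst (snd nI) <= fst J /\ fst J < snd J /\ snd J <= snd (snd nI) /\
    forall a, fst J <= a <= snd J -> ~ E (fst nI) a).
  { intros [n [p q]]. simpl.
    destruct (Rlt_or_le p q) as [Hpq | Hqp]; [| exists (0, 0); lra].
    destruct (avoid_closed_set (E n) p q (HE n) Hpq) as [p' [q' H]].
    - apply NNPP. intro Hall. apply Hno. exists n, p, q. split; [exact Hpq|].
      intros a Ha. apply NNPP. intro Hna. apply Hall. eauto.
    - exists (p', q'). auto. }
  destruct (choice _ Hshrink) as [shrink Hsh].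
  set (I := fix I (n : nat) : R * R :=
              match n with O => (A, B) | S k => shrink (k, I k) end).
  assert (Hpos : forall n, fst (I n) < snd (I n)).
  { induction n as [| n IH]; [exact HAB|]. exact (proj1 (proj2 (Hsh (n, I n) IH))). }
  destruct (nested_intervals (fun n => fst (I n)) (fun n => snd (I n))) as [s Hs].
  - intro n. exact (proj1 (Hsh (n, I n) (Hpos n))).
  - intro n. exact (proj1 (proj2 (proj2 (Hsh (n, I n) (Hpos n))))).
  - intro n. left. apply Hpos.
  - destruct (Hcov s (Hs O)) as [n Hn].
    exact (proj2 (proj2 (proj2 (Hsh (n, I n) (Hpos n)))) s (Hs (S n)) Hn).
Qed.

Section UniformBounds.
Variable f : R -> R.
Variable beta : R.
Hypothesis f_cont : continuity f.
Hypothesis f_RV : RV0 f beta.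
Hypothesis beta_pos : 0 < beta.

Let f_pos : forall y, 0 < y -> 0 < f y := proj1 f_RV.

Definition comparable_scales (C : R) (n : nat) (a : R) : Prop :=
  1 <= a <= 2 /\ forall z, 0 < z < / (INR n + 1) ->
    f (a * z) <= C * f z /\ f z <= C * f (a * z).

Lemma comparable_scales_closed C n : is_closed (comparable_scales C n).
Proof.
  assert (Hconst : forall c : R, continuity (fun _ => c)) by (intros c a; reg).
  assert (Hscale : forall z, continuity (fun a => f (a * z))).
  { intros z a. apply (continuity_pt_comp (fun a => a * z) f); [reg | apply f_cont]. }
  apply is_closed_and.
  - apply is_closed_and; apply is_closed_le; intro; reg.
  - apply (is_closed_forall (fun z => 0 < z < / (INR n + 1))
             (fun z a => f (a * z) <= C * f z /\ f z <= C * f (a * z))).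
    intro z. apply is_closed_and; apply is_closed_le;
      apply Hconst || apply Hscale || apply continuity_scal, Hscale.
Qed.

(* By pointwise regular variation, every scale in [1,2] is (2^beta+1)-comparable
   below some threshold. *)
Lemma comparable_scales_cover a :
  1 <= a <= 2 -> exists n, comparable_scales (Rpower 2 beta + 1) n a.
Proof.
  intros Ha. destruct (proj2 f_RV a ltac:(lra) (1 / 2) ltac:(lra)) as [d [Hd Hconv]].
  destruct (archimed_cor1 d Hd) as [N [HN HN0]].
  exists N. split; [exact Ha|]. intros z Hz.
  assert (HINR : 0 < INR N) by (apply lt_0_INR; auto).
  assert (/ (INR N + 1) < / INR N) by (apply Rinv_lt_contravar; nra).
  specialize (Hconv z ltac:(lra)). apply Rabs_def2 in Hconv.
  assert (Hfz : 0 < f z) by (apply f_pos; lra).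
  assert (Hfaz : 0 < f (a * z)) by (apply f_pos; nra).
  assert (1 <= Rpower a beta) by (apply Rpower_ge_1; lra).
  assert (Rpower a beta <= Rpower 2 beta) by (apply Rle_Rpower_l; lra).
  assert (Hratio : f (a * z) = f (a * z) / f z * f z) by (field; lra).
  split; rewrite Hratio; nra.
Qed.

(* Two-sided comparability of f(r z) and f(z), uniformly for r in some [1, rho], rho > 1.
   Baire's theorem yields a scale interval [p,q] on which the bounds hold uniformly;
   ratios r in [1, q/p] are then compared through the scale p. *)
Lemma local_comparability : exists rho C d, 1 < rho /\ 1 <= C /\ 0 < d /\
  forall z r, 0 < z < d -> 1 <= r <= rho -> f (r * z) <= C * f z /\ f z <= C * f (r * z).
Proof.
  set (C0 := Rpower 2 beta + 1).
  destruct (baire_interval (comparable_scales C0) 1 2 ltac:(lra)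
              (comparable_scales_closed C0) comparable_scales_cover)
    as [n [p [q [Hpq Hin]]]].
  destruct (Hin p ltac:(lra)) as [Hp1 Hp]. destruct (Hin q ltac:(lra)) as [Hq1 _].
  assert (HC0 : 2 <= C0) by (pose proof (Rpower_ge_1 2 beta); unfold C0; lra).
  assert (Hn : 0 < INR n + 1) by (pose proof (pos_INR n); lra).
  exists (q / p), (C0 * C0), (p / (INR n + 1)).
  split; [apply (Rmult_lt_reg_r p); [lra|]; field_simplify; lra|].
  split; [nra|]. split; [apply Rdiv_lt_0_compat; lra|].
  intros z r Hz Hr.
  set (w := z / p).
  assert (Hw : 0 < w < / (INR n + 1)).
  { unfold w. split; [apply Rdiv_lt_0_compat; lra|].
    apply (Rmult_lt_reg_r p); [lra|]. replace (z / p * p) with z by (field; lra).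
    replace (/ (INR n + 1) * p) with (p / (INR n + 1)) by (field; lra). lra. }
  assert (Hrp : p <= r * p <= q).
  { split; [nra|]. assert (r * p <= q / p * p) by (apply Rmult_le_compat_r; lra).
    replace (q / p * p) with q in * by (field; lra). lra. }
  destruct (proj2 (Hin (r * p) Hrp) w Hw) as [A1 A2].
  destruct (Hp w Hw) as [B1 B2].
  replace (r * p * w) with (r * z) in A1, A2 by (unfold w; field; lra).
  replace (p * w) with z in B1, B2 by (unfold w; field; lra).
  assert (0 < f w) by (apply f_pos; lra).
  split; nra.
Qed.

Lemma iterated_comparability rho C d : 1 < rho -> 1 <= C ->
  (forall z r, 0 < z < d -> 1 <= r <= rho -> f (r * z) <= C * f z /\ f z <= C * f (r * z)) ->
  forall m z r, 0 < z -> z * rho ^ m < d -> 1 <= r <= rho ^ m ->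
    f (r * z) <= C ^ m * f z /\ f z <= C ^ m * f (r * z).
Proof.
  intros Hrho HC Hloc m. induction m as [| m IH]; intros z r Hz Hzd Hr.
  - simpl in *. replace r with 1 by lra. rewrite Rmult_1_l. lra.
  - assert (1 <= rho ^ m) by (apply pow_R1_Rle; lra).
    assert (1 <= C ^ m) by (apply pow_R1_Rle; lra).
    simpl in Hzd, Hr |- *.
    assert (Hzd' : z < d) by nra.
    destruct (Hloc z rho ltac:(lra) ltac:(lra)) as [B1 B2].
    assert (0 < f z) by (apply f_pos; lra).
    assert (0 < f (rho * z)) by (apply f_pos; nra).
    assert (0 < f (r * z)) by (apply f_pos; nra).
    destruct (Rle_or_lt r rho) as [Hr1 | Hr1].
    + destruct (Hloc z r ltac:(lra) ltac:(lra)) as [A1 A2]. split; nra.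
    + (* r = rho * (r / rho): one step by rho, then the induction hypothesis from rho z *)
      destruct (IH (rho * z) (r / rho) ltac:(nra) ltac:(nra)) as [A1 A2].
      { split; apply (Rmult_le_reg_r rho); try lra; field_simplify; lra. }
      replace (r / rho * (rho * z)) with (r * z) in A1, A2 by (field; lra).
      split; nra.
Qed.

Lemma bounded_ratio_comparability (R0 : R) : exists K d, 0 < d /\
  forall z r, 0 < z < d -> 1 <= r <= R0 -> f (r * z) <= K * f z /\ f z <= K * f (r * z).
Proof.
  destruct local_comparability as [rho [C [d [Hrho [HC [Hd Hloc]]]]]].
  destruct (pow_unbounded rho R0 Hrho) as [m Hm].
  assert (1 <= rho ^ m) by (apply pow_R1_Rle; lra).
  exists (C ^ m), (d / rho ^ m). split; [apply Rdiv_lt_0_compat; lra|].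
  intros z r Hz Hr. apply (iterated_comparability rho C d Hrho HC Hloc); try lra.
  assert (Hzd : z * rho ^ m < d / rho ^ m * rho ^ m) by (apply Rmult_lt_compat_r; lra).
  replace (d / rho ^ m * rho ^ m) with d in Hzd by (field; lra). lra.
Qed.

Lemma halving_decreases : exists dh, 0 < dh /\ forall v, 0 < v < dh -> f (v / 2) < f v.
Proof.
  assert (Hhalf : Rpower (/ 2) beta < 1).
  { unfold Rpower. rewrite <- exp_0. apply exp_increasing.
    assert (ln (/ 2) < 0) by (rewrite <- ln_1; apply ln_increasing; lra). nra. }
  destruct (proj2 f_RV (/ 2) ltac:(lra) (1 - Rpower (/ 2) beta) ltac:(lra)) as [dh [Hdh Hconv]].
  exists dh. split; [exact Hdh|]. intros v Hv.
  specialize (Hconv v Hv). apply Rabs_def2 in Hconv.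
  assert (0 < f v) by (apply f_pos; lra).
  replace (v / 2) with (/ 2 * v) by field.
  replace (f (/ 2 * v)) with (f (/ 2 * v) / f v * f v) by (field; lra). nra.
Qed.

(* Below z, f is dominated by f z: climbing from y to z by doublings, the last step is
   controlled by comparability on [1,2] and every earlier step by halving_decreases. *)
Lemma domination_below K d dh :
  (forall z r, 0 < z < d -> 1 <= r <= 2 -> f z <= K * f (r * z)) ->
  (forall v, 0 < v < dh -> f (v / 2) < f v) ->
  forall z y, 0 < z -> z < d -> z < dh -> 0 < y <= z -> f y <= K * f z.
Proof.
  intros Hcomp Hhalf z y Hz Hzd Hzdh Hy.
  assert (Hclimb : forall j y, 0 < y <= z -> z <= 2 ^ j * y -> f y <= K * f z).
  { intro j. induction j as [| j IH]; intros y' Hy' Hj; simpl in Hj.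
    - replace y' with z by lra.
      pose proof (Hcomp z 1 ltac:(lra) ltac:(lra)). rewrite Rmult_1_l in *. assumption.
    - destruct (Rle_or_lt z (2 * y')) as [H2 | H2].
      + pose proof (Hcomp y' (z / y') ltac:(lra)) as Hc.
        replace (z / y' * y') with z in Hc by (field; lra). apply Hc.
        split; apply (Rmult_le_reg_r y'); try lra; field_simplify; lra.
      + assert (f (2 * y') <= K * f z) by (apply IH; lra).
        assert (f (2 * y' / 2) < f (2 * y')) by (apply Hhalf; lra).
        replace (2 * y' / 2) with y' in * by field. lra. }
  destruct (pow_unbounded 2 (z / y) ltac:(lra)) as [j Hj].
  apply (Hclimb j y Hy).
  apply (Rmult_le_compat_r y) in Hj; [| lra].
  replace (z / y * y) with z in Hj by (field; lra). lra.
Qed.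

Lemma uniform_upper_bound (M : R) : exists K d, 0 < d /\
  forall z y, 0 < z < d -> 0 < y <= M * z -> f y <= K * f z.
Proof.
  destruct (bounded_ratio_comparability (Rmax M 2)) as [K [d [Hd Hcomp]]].
  destruct halving_decreases as [dh [Hdh Hhalf]].
  pose proof (Rmax_l M 2). pose proof (Rmax_r M 2).
  exists K, (Rmin d dh). split; [apply Rmin_pos; lra|].
  intros z y Hz Hy.
  pose proof (Rmin_l d dh). pose proof (Rmin_r d dh).
  destruct (Rle_or_lt y z) as [Hyz | Hzy].
  - apply (domination_below K d dh); [| exact Hhalf | lra ..].
    intros z' r Hz' Hr. apply (Hcomp z' r Hz'). lra.
  - destruct (Hcomp z (y / z) ltac:(lra)) as [Hc _].
    { split; apply (Rmult_le_reg_r z); try lra;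
        replace (y / z * z) with y by (field; lra); nra. }
    replace (y / z * z) with y in Hc by (field; lra). exact Hc.
Qed.

End UniformBounds.

Lemma doubling_gain (f : R -> R) beta : RV0 f beta -> 1 < beta ->
  exists c d, 2 < c /\ 0 < d /\ forall v, 0 < v < d -> c * f v <= f (2 * v).
Proof.
  intros [f_pos f_RV] Hbeta.
  assert (H2 : 2 < Rpower 2 beta) by (rewrite <- (Rpower_1 2) at 1 by lra; apply Rpower_lt; lra).
  destruct (f_RV 2 ltac:(lra) ((Rpower 2 beta - 2) / 2) ltac:(lra)) as [d [Hd Hconv]].
  exists ((Rpower 2 beta + 2) / 2), d. split; [lra|]. split; [exact Hd|].
  intros v Hv. specialize (Hconv v Hv). apply Rabs_def2 in Hconv.
  assert (0 < f v) by (apply f_pos; lra).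
  replace (f (2 * v)) with (f (2 * v) / f v * f v) by (field; lra).
  apply Rmult_le_compat_r; lra.
Qed.

Section Primitive.
Variable f F : R -> R.
Hypothesis f_cont : continuity f.
Hypothesis f_pos : forall y, 0 < y -> 0 < f y.
Hypothesis F_def : IsF f F.

Definition inv_f (u : R) : R := / f u.

Definition tail_integral (d y : R) : R := RInt inv_f y d.

Lemma inv_f_integrable a b : 0 < a -> 0 < b -> ex_RInt inv_f a b.
Proof.
  intros Ha Hb. apply (@ex_RInt_continuous R_CompleteNormedModule). intros z Hz. unfold inv_f.
  assert (0 < Rmin a b) by (apply Rmin_pos; auto).
  apply continuity_pt_filterlim, continuity_pt_inv; [apply f_cont|].
  specialize (f_pos z ltac:(lra)). lra.
Qed.

Lemma tail_integral_nonneg d y : 0 < y -> y <= d -> 0 <= tail_integral d y.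
Proof.
  intros Hy Hyd. apply RInt_ge_0; [exact Hyd | apply inv_f_integrable; lra |].
  intros u Hu. left. unfold inv_f. apply Rinv_0_lt_compat, f_pos. lra.
Qed.

Lemma F_as_tail y : 0 < y -> F y = tail_integral 1 y.
Proof. intros Hy. destruct (F_def y Hy) as [pr ->]. rewrite <- RInt_Reals. reflexivity. Qed.

Lemma F_split d y : 0 < y -> 0 < d -> F y = tail_integral d y + F d.
Proof.
  intros Hy Hd. rewrite !F_as_tail by lra. unfold tail_integral.
  apply eq_sym, (RInt_Chasles inv_f y d 1); apply inv_f_integrable; lra.
Qed.

Lemma F_antitone a b : 0 < a -> a <= b -> F b <= F a.
Proof.
  intros Ha Hab. rewrite (F_split b a) by lra.
  pose proof (tail_integral_nonneg b a Ha Hab). lra.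
Qed.

Section Inverse.
Variables (Finv : R -> R) (T0 : R).
Hypothesis Finv_spec : forall t, T0 <= t -> 0 < Finv t /\ F (Finv t) = t.

Lemma Finv_antitone r t : T0 <= r -> r <= t -> Finv t <= Finv r.
Proof.
  intros Hr Hrt. destruct (Finv_spec r Hr) as [A1 A2]. destruct (Finv_spec t ltac:(lra)) as [B1 B2].
  apply Rnot_lt_le. intro Hlt.
  assert (F (Finv t) <= F (Finv r)) by (apply F_antitone; lra).
  assert (r = t) by lra. subst. lra.
Qed.

Lemma Finv_eventually_small eta : 0 < eta -> exists T, T0 <= T /\ forall t, T <= t -> Finv t < eta.
Proof.
  intros Heta. exists (Rmax T0 (F eta + 1)). split; [apply Rmax_l|].
  intros t Ht. apply Rmax_le_inv in Ht.
  destruct (Finv_spec t ltac:(lra)) as [A1 A2]. apply Rnot_le_lt. intro Hle.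
  assert (F (Finv t) <= F eta) by (apply F_antitone; lra). lra.
Qed.

Lemma eventually_in_doubling_range (z : R -> R) k d : 0 < d ->
  tends_to_at_pinfty z 0 -> tends_to_pinfty (fun t => z t / Finv t) ->
  exists T, T0 <= T /\ forall t, T <= t -> 2 ^ k * Finv t <= z t <= d.
Proof.
  intros Hd z_lim z_big.
  assert (Hp : 0 < 2 ^ k) by (apply pow_lt; lra).
  destruct (z_big (2 ^ k)) as [Ta HTa].
  destruct (Finv_eventually_small (d / 2 ^ k)) as [Tb [HTb0 HTb]];
    [apply Rdiv_lt_0_compat; lra |].
  destruct (z_lim d Hd) as [Tc HTc].
  exists (Rmax Tb (Rmax Ta Tc)). split; [eapply Rle_trans; [exact HTb0 | apply Rmax_l] |].
  intros t Ht. destruct (Rmax_le_inv _ _ _ Ht) as [HtTb Ht'].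
  destruct (Rmax_le_inv _ _ _ Ht') as [HtTa HtTc].
  destruct (Finv_spec t ltac:(lra)) as [HFinv _].
  specialize (HTa t HtTa). specialize (HTb t HtTb). specialize (HTc t HtTc).
  apply Rabs_def2 in HTc.
  apply (Rmult_lt_compat_r (Finv t)) in HTa; [| lra].
  replace (z t / Finv t * Finv t) with (z t) in HTa by (field; lra).
  apply (Rmult_lt_compat_r (2 ^ k)) in HTb; [| lra].
  replace (d / 2 ^ k * 2 ^ k) with d in HTb by (field; lra).
  split; lra.
Qed.
End Inverse.

(* If f(2v) >= c f(v) near 0, the tail integral contracts under doubling:
   int_{2y}^d 1/f = 2 int_y^{d/2} 1/f(2w) dw <= (2/c) int_y^d 1/f. *)
Lemma tail_integral_doubling c d : 0 < c -> 0 < d ->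
  (forall v, 0 < v < d -> c * f v <= f (2 * v)) ->
  forall y, 0 < y -> 2 * y <= d -> c / 2 * tail_integral d (2 * y) <= tail_integral d y.
Proof.
  intros Hc Hd Hdbl y Hy Hyd. unfold tail_integral.
  rewrite <- (RInt_Chasles inv_f y (d / 2) d) by (apply inv_f_integrable; lra).
  assert (0 <= RInt inv_f (d / 2) d) by (apply (tail_integral_nonneg d); lra).
  assert (Hsub : RInt (fun w => scal 2 (inv_f (2 * w + 0))) y (d / 2) = RInt inv_f (2 * y) d).
  { replace (RInt inv_f (2 * y) d)
      with (RInt inv_f (2 * y + 0) (2 * (d / 2) + 0)) by (f_equal; field).
    apply (@RInt_comp_lin R_CompleteNormedModule inv_f).
    apply inv_f_integrable; lra. }
  assert (Hle : RInt (fun w => scal 2 (inv_f (2 * w + 0))) y (d / 2)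
                <= RInt (fun w => scal (2 / c) (inv_f w)) y (d / 2)).
  { apply RInt_le; [lra | | |].
    - apply (@ex_RInt_comp_lin R_NormedModule).
      replace (2 * y + 0) with (2 * y) by ring. replace (2 * (d / 2) + 0) with d by field.
      apply inv_f_integrable; lra.
    - apply (@ex_RInt_scal R_NormedModule), inv_f_integrable; lra.
    - intros w Hw. unfold scal, inv_f; simpl; unfold mult; simpl.
      replace (2 * w + 0) with (2 * w) by ring.
      specialize (Hdbl w ltac:(lra)).
      assert (0 < f w) by (apply f_pos; lra). assert (0 < f (2 * w)) by (apply f_pos; lra).
      replace (2 / c * / f w) with (2 * / (c * f w)) by (field; lra).
      apply Rmult_le_compat_l; [lra|]. apply Rinv_le_contravar; nra. }
  rewrite (@RInt_scal R_CompleteNormedModule inv_f) in Hle by (apply inv_f_integrable; lra).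
  rewrite Hsub in Hle. change (scal (2 / c) ?I) with (2 / c * I) in Hle.
  change (plus ?I ?J) with (I + J).
  assert (Hcancel : forall I : R, c / 2 * (2 / c * I) = I) by (intro; field; lra).
  apply (Rmult_le_compat_l (c / 2)) in Hle; [| lra]. rewrite Hcancel in Hle. lra.
Qed.

Lemma F_geometric_decay c d : 0 < c -> 0 < d ->
  (forall v, 0 < v < d -> c * f v <= f (2 * v)) ->
  forall k y, 0 < y -> 2 ^ k * y <= d -> (c / 2) ^ k * (F (2 ^ k * y) - F d) <= F y - F d.
Proof.
  intros Hc Hd Hdbl k y Hy. rewrite (F_split d y) by lra.
  induction k as [| k IH]; intros Hk.
  - simpl. rewrite !Rmult_1_l. rewrite (F_split d y) by lra. lra.
  - assert (0 < 2 ^ k) by (apply pow_lt; lra).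
    assert (Hqk : 0 < (c / 2) ^ k) by (apply pow_lt; lra).
    simpl in Hk |- *.
    pose proof (IH ltac:(lra)) as IHk.
    rewrite (F_split d (2 ^ k * y)) in IHk by nra.
    rewrite (F_split d (2 * 2 ^ k * y)) by nra.
    pose proof (tail_integral_doubling c d Hc Hd Hdbl (2 ^ k * y) ltac:(nra) ltac:(lra)) as Hstep.
    replace (2 * (2 ^ k * y)) with (2 * 2 ^ k * y) in Hstep by ring.
    assert (Hmul := Rmult_le_compat_l _ _ _ (Rlt_le _ _ Hqk) Hstep).
    replace (c / 2 * (c / 2) ^ k * (tail_integral d (2 * 2 ^ k * y) + F d - F d))
      with ((c / 2) ^ k * (c / 2 * tail_integral d (2 * 2 ^ k * y))) by ring.
    lra.
Qed.

Lemma F_between_bound c d k y w : 0 < c -> 0 < d ->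
  (forall v, 0 < v < d -> c * f v <= f (2 * v)) ->
  0 < y -> 2 ^ k * y <= w -> w <= d ->
  F d <= F w /\ (c / 2) ^ k * (F w - F d) <= F y - F d.
Proof.
  intros Hc Hd Hdbl Hy Hlow Hhigh.
  assert (0 < 2 ^ k) by (apply pow_lt; lra).
  assert (0 < (c / 2) ^ k) by (apply pow_lt; lra).
  assert (F w <= F (2 ^ k * y)) by (apply F_antitone; nra).
  split; [apply F_antitone; nra |].
  pose proof (F_geometric_decay c d Hc Hd Hdbl k y Hy ltac:(lra)). nra.
Qed.

End Primitive.

(* Since f(2v) >= c f(v) near 0 with q = c/2 > 1, doubling k times divides F - F(d) by q^k.
   Eventually z(t) >= 2^k Finv(t), so F(z(t)) <= F(2^k Finv(t)) <= F(d) + t / q^k. *)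
Lemma F_sublinear_along (f F Finv z : R -> R) beta T0 :
  continuity f -> RV0 f beta -> 1 < beta -> IsF f F ->
  (forall t, T0 <= t -> 0 < Finv t /\ F (Finv t) = t) ->
  tends_to_at_pinfty z 0 -> tends_to_pinfty (fun t => z t / Finv t) ->
  tends_to_at_pinfty (fun t => F (z t) / t) 0.
Proof.
  intros f_cont f_RV Hbeta F_def Finv_spec z_lim z_big eps Heps.
  assert (f_pos := proj1 f_RV).
  destruct (doubling_gain f beta f_RV Hbeta) as [c [d0 [Hc [Hd0 Hdbl]]]].
  (* d <= 1 makes F(d) >= 0 *)
  set (d := Rmin d0 1).
  assert (Hd : 0 < d <= 1 /\ d <= d0).
  { split; [split; [apply Rmin_pos; lra | apply Rmin_r] | apply Rmin_l]. }
  assert (HFd : 0 <= F d)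
    by (rewrite (F_as_tail f F F_def d) by lra; apply (tail_integral_nonneg f f_cont f_pos); lra).
  destruct (pow_unbounded (c / 2) (2 / eps + 1) ltac:(lra)) as [k Hk].
  set (Q := (c / 2) ^ k) in Hk.
  assert (HQ : 2 < eps * Q).
  { apply (Rmult_le_compat_l eps) in Hk; [| lra].
    replace (eps * (2 / eps + 1)) with (2 + eps) in Hk by (field; lra). lra. }
  destruct (eventually_in_doubling_range f F f_cont f_pos F_def Finv T0 Finv_spec z k d
              ltac:(lra) z_lim z_big) as [T [HT0 HT]].
  exists (Rmax T (Rmax 1 (2 * F d / eps))). intros t Ht.
  destruct (Rmax_le_inv _ _ _ Ht) as [HtT Ht'].
  destruct (Rmax_le_inv _ _ _ Ht') as [Ht_1 Ht_Fd].
  destruct (Finv_spec t ltac:(lra)) as [HFinv HFFinv].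
  destruct (HT t HtT) as [Hkz Hzd].
  destruct (F_between_bound f F f_cont f_pos F_def c d k (Finv t) (z t) ltac:(lra) ltac:(lra)
              ltac:(intros v Hv; apply Hdbl; lra) HFinv ltac:(lra) ltac:(lra))
    as [Hlow Hdecay].
  fold Q in Hdecay. rewrite HFFinv in Hdecay.
  assert (HG : F (z t) - F d < eps * t / 2).
  { apply Rnot_le_lt. intro Hge.
    assert (Q * (eps * t / 2) <= Q * (F (z t) - F d)) by (apply Rmult_le_compat_l; nra).
    assert (t < Q * (eps * t / 2)) by nra. lra. }
  assert (HFd2 : F d <= eps * t / 2).
  { apply (Rmult_le_compat_r (eps / 2)) in Ht_Fd; [| lra].
    replace (2 * F d / eps * (eps / 2)) with (F d) in Ht_Fd by (field; lra). lra. }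
  rewrite Rminus_0_r, Rabs_right.
  - apply (Rmult_lt_reg_r t); [lra |].
    replace (F (z t) / t * t) with (F (z t)) by (field; lra). lra.
  - apply Rle_ge, Rdiv_le_0_compat; lra.
Qed.

Section Solution.
Variables f g x : R -> R.
Hypothesis g_pos : forall t, 0 < t -> 0 < g t.
Hypothesis x_ode : forall t, 0 < t -> derivable_pt_lim x t (- f (x t) + g t).

(* If f <= 0 on (-oo,0] and x starts positive, x stays positive: wherever x <= 0 the
   derivative -f(x) + g is positive, so x cannot reach a value <= 0. *)
Lemma solution_positive :
  (forall y, y <= 0 -> f y <= 0) -> 0 < x 0 ->
  (forall eps, 0 < eps -> exists delta, 0 < delta /\
     forall t, 0 <= t < delta -> Rabs (x t - x 0) < eps) ->
  forall t, 0 <= t -> 0 < x t.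
Proof.
  intros f_nonpos Hx0 Hcont0 t Ht.
  destruct (Req_dec t 0) as [-> | Ht0]; [exact Hx0|].
  destruct (Hcont0 (x 0) Hx0) as [delta [Hdelta Hnear]].
  set (s := Rmin delta t / 2).
  assert (Hs : 0 < s < t /\ s < delta).
  { assert (0 < Rmin delta t) by (apply Rmin_pos; lra).
    pose proof (Rmin_l delta t). pose proof (Rmin_r delta t). unfold s. lra. }
  assert (Hxs : 0 < x s) by (specialize (Hnear s ltac:(lra)); apply Rabs_def2 in Hnear; lra).
  apply Rnot_le_lt. intro Hxt.
  assert (x s <= x t); [| lra].
  apply (endpoint_dominates x (fun r => - f (x r) + g r) s t); [lra | lra | exact x_ode |].
  intros r Hr Hxr. pose proof (f_nonpos (x r) ltac:(lra)). pose proof (g_pos r ltac:(lra)). lra.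
Qed.

(* Given M, once g > K f(Finv) (K from the uniform
   upper bound for ratios <= M), a time t with x(t) <= M Finv(t) would force x(T) <= x(t) for
   every earlier large T: at any r in [T,t] where x(r) <= x(t) we get
   x(r) <= M Finv(t) <= M Finv(r), hence f(x(r)) <= K f(Finv(r)) < g(r), i.e. x'(r) > 0.
   This contradicts x(t) -> 0. *)
Lemma solution_outgrows_Finv (F Finv : R -> R) beta T0 :
  continuity f -> RV0 f beta -> 0 < beta -> IsF f F ->
  (forall t, T0 <= t -> 0 < Finv t /\ F (Finv t) = t) ->
  tends_to_pinfty (fun t => g t / f (Finv t)) ->
  (forall t, 0 <= t -> 0 < x t) -> tends_to_at_pinfty x 0 ->
  tends_to_pinfty (fun t => x t / Finv t).
Proof.
  intros f_cont f_RV Hbeta F_def Finv_spec Hgf x_pos x_lim M.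
  assert (f_pos := proj1 f_RV).
  destruct (uniform_upper_bound f beta f_cont f_RV Hbeta M) as [K [d [Hd Hbound]]].
  destruct (Hgf K) as [T1 HT1].
  destruct (Finv_eventually_small f F f_cont f_pos F_def Finv T0 Finv_spec d Hd)
    as [T2 [HT02 HT2]].
  set (T := Rmax (Rmax T1 T2) 1).
  destruct (Rmax_le_inv _ _ _ (Rle_refl T)) as [HT12 HT_1].
  destruct (Rmax_le_inv _ _ _ HT12) as [HT1T HT2T].
  destruct (x_lim (x T) (x_pos T ltac:(lra))) as [T3 HT3].
  exists (Rmax T T3). intros t Ht. destruct (Rmax_le_inv _ _ _ Ht) as [HtT HtT3].
  destruct (Finv_spec t ltac:(lra)) as [HFinv_t _].
  assert (Hgt : M * Finv t < x t).
  { apply Rnot_le_lt. intro Hle.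
    assert (HM : 0 < M) by (pose proof (x_pos t ltac:(lra)); nra).
    assert (x T <= x t).
    { apply (endpoint_dominates x (fun r => - f (x r) + g r) T t); [lra | lra | exact x_ode |].
      intros r Hr Hxr.
      assert (Finv t <= Finv r)
        by (apply (Finv_antitone f F f_cont f_pos F_def Finv T0 Finv_spec); lra).
      destruct (Finv_spec r ltac:(lra)) as [HFinv_r _].
      assert (f (x r) <= K * f (Finv r))
        by (apply Hbound; [split; [| apply HT2]; lra | split; [apply x_pos |]; nra]).
      specialize (HT1 r ltac:(lra)). assert (0 < f (Finv r)) by (apply f_pos; lra).
      apply (Rmult_lt_compat_r (f (Finv r))) in HT1; [| lra].
      replace (g r / f (Finv r) * f (Finv r)) with (g r) in HT1 by (field; lra). lra. }
    specialize (HT3 t ltac:(lra)). apply Rabs_def2 in HT3. lra. }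
  apply (Rmult_lt_reg_r (Finv t)); [lra |].
  replace (x t / Finv t * Finv t) with (x t) by (field; lra). exact Hgt.
Qed.

End Solution.

Theorem mainTheorem10
  (f g F Finv x : R -> R) (xi beta theta : R)
  (Hf_cont : continuity f) (Hf_lip : loc_lipschitz f) (Hf0 : f 0 = 0)
  (Hf_sign : forall y, y <> 0 -> 0 < y * f y)
  (HF : IsF f F) (HFinv : IsFinv F Finv)
  (Hg_cont : forall t, 0 < t -> continuity_pt g t)
  (Hg_cont0 : forall eps, 0 < eps -> exists delta, 0 < delta /\
       forall t, 0 <= t < delta -> Rabs (g t - g 0) < eps)
  (Hg_pos : forall t, 0 < t -> 0 < g t)
  (Hxi : 0 < xi)
  (Hx_ode : forall t, 0 < t -> derivable_pt_lim x t (- f (x t) + g t))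
  (Hx_cont0 : forall eps, 0 < eps -> exists delta, 0 < delta /\
       forall t, 0 <= t < delta -> Rabs (x t - xi) < eps)
  (Hx0 : x 0 = xi)
  (Hx_lim : tends_to_at_pinfty x 0)
  (Hgf : tends_to_pinfty (fun t => g t / f (Finv t)))
  (HfRV : RV0 f beta) (Hbeta : 1 < beta)
  (HgRV : RVinf g (- theta))
  (Htheta : 0 < theta \/ (theta = 0 /\ asymp_decreasing g)) :
  tends_to_pinfty (fun t => x t / Finv t) /\
  tends_to_at_pinfty (fun t => F (x t) / t) 0.
Proof.
  destruct HFinv as [T0 Finv_spec].
  assert (f_nonpos : forall y, y <= 0 -> f y <= 0).
  { intros y Hy. destruct (Req_dec y 0) as [-> | Hy0]; [lra |].
    specialize (Hf_sign y Hy0). nra. }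
  assert (x_pos : forall t, 0 <= t -> 0 < x t).
  { subst xi. exact (solution_positive f g x Hg_pos Hx_ode f_nonpos Hxi Hx_cont0). }
  assert (x_big : tends_to_pinfty (fun t => x t / Finv t))
    by (apply (solution_outgrows_Finv f g x Hx_ode F Finv beta T0); auto; lra).
  split; [exact x_big |].
  exact (F_sublinear_along f F Finv x beta T0 Hf_cont HfRV Hbeta HF Finv_spec Hx_lim x_big).
Qed.
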